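(* Let $X$ be an $S^{\ast}$-well-filtered space and $Y$ a retract of $X$, i.e. there are continuous maps $f:X\to Y$ and $g:Y\to X$ with $f\circ g=\mathrm{id}_Y$. Then $Y$ is $S^{\ast}$-well-filtered. In particular, if a product $\prod_{i\in I}X_i$ of $T_0$-spaces is $S^{\ast}$-well-filtered, then each $X_i$ is $S^{\ast}$-well-filtered.
   Context: All spaces are $T_0$. The specialization order of $X$ is given by $x\le y$ iff $x\in cl(\{y\})$; ${\uparrow}$ is taken with respect to it; a subset is saturated if it is an upper set in the specialization order. $K(X)$ denotes the set of all nonempty compact saturated subsets of $X$; a family in $K(X)$ is filtered if any two members contain a common member. $X$ is $S^{\ast}$-well-filtered if for every filtered family $\{K_i\mid i\in I\}\subseteq K(X)$, every $G\in K(X)$ and every nonempty open $U$, $\bigcap_{i\in I}K_i\cap G\subseteq U$ implies $K_i\cap G\subseteq U$ for some $i$. *)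

From HB Require Import structures.
From mathcomp Require Import all_boot all_order.
From mathcomp Require Import boolp classical_sets topology separation_axioms.
Set Implicit Arguments. Unset Strict Implicit. Unset Printing Implicit Defensive.
Local Open Scope classical_set_scope.

Section SWF.
Context {X : topologicalType}.

Definition spec_le (x y : X) : Prop := closure [set y] x.

Definition saturated (A : set X) : Prop :=
  forall x y, A x -> spec_le x y -> A y.

Definition KX (A : set X) : Prop := A !=set0 /\ compact A /\ saturated A.

Definition filtered_KX (I : Type) (K : I -> set X) : Prop :=
  [/\ inhabited I, (forall i, KX (K i)) &
      (forall i j, exists k, K k `<=` K i /\ K k `<=` K j)].

End SWF.

Definition S_star_well_filtered (X : topologicalType) : Prop :=
  forall (I : Type) (K : I -> set X), filtered_KX K ->
  forall G : set X, KX G ->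
  forall U : set X, open U -> U !=set0 ->
  (\bigcap_(i in setT) K i) `&` G `<=` U -> exists i, K i `&` G `<=` U.

From HB Require Import structures.
From mathcomp Require Import all_boot all_order.
From mathcomp Require Import mathcomp_extra boolp classical_sets topology separation_axioms.
Local Open Scope classical_set_scope.

(* If [f \o g = id] with [X] S*-well-filtered, transport [K_i, G] from [Y] to
   [X] by [K |-> up (g K)]: these are again compact saturated, their filtered
   intersection with [up (g G)] is mapped by [f] into [(\bigcap K_i) `&` G]
   (since [f] is monotone for the specialization order and the sets are
   saturated), so it lies in [f^-1 U]; well-filteredness of [X] yields an
   index [i] with [up (g K_i) `&` up (g G) `<=` f^-1 U], and applying this to
   [g y] gives [K_i `&` G `<=` U].  A factor of a product is a retract of it
   via the projection and the insertion into a fixed point. *)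

Section SpecializationOrder.
Context {X : topologicalType}.

Lemma spec_le_refl (x : X) : spec_le x x.
Proof. by move=> V nV; exists x; split => //; apply: nbhs_singleton. Qed.

Lemma open_spec_le (U : set X) (x y : X) : open U -> U x -> spec_le x y -> U y.
Proof.
move=> oU Ux xy.
by have [z [/= -> //]] := xy U (open_nbhs_nbhs (conj oU Ux)).
Qed.

Lemma spec_le_trans (x y z : X) : spec_le x y -> spec_le y z -> spec_le x z.
Proof.
move=> xy yz V nV.
have [_ [/= -> Vy]] := xy _ (nbhs_interior nV).
have [_ [/= -> Vz]] := yz _ (open_nbhs_nbhs (conj (@open_interior _ V) Vy)).
by exists z; split => //; apply: interior_subset.
Qed.

Definition up_closure (B : set X) : set X :=
  [set x | exists2 b, B b & spec_le b x].

Lemma sub_up_closure (B : set X) : B `<=` up_closure B.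
Proof. by move=> b Bb; exists b => //; apply: spec_le_refl. Qed.

Lemma up_closureS (A B : set X) : A `<=` B -> up_closure A `<=` up_closure B.
Proof. by move=> AB x [a Aa ax]; exists a => //; apply: AB. Qed.

Lemma up_closure_saturated (B : set X) : saturated (up_closure B).
Proof. by move=> x y [b Bb bx] xy; exists b => //; apply: spec_le_trans bx xy. Qed.

(* A cluster point [b \in B] of the filter [F] on [up_closure B] is found via
   the filter on [B] generated by the sets [B `&` (down-closure of C)],
   [C \in F]; since open sets are upper sets, [b] clusters [F] as well. *)
Lemma up_closure_compact (B : set X) : compact B -> compact (up_closure B).
Proof.
move=> cB F PF Fup.
pose down C := B `&` [set b | exists2 c, C c & spec_le b c].
pose G := filter_from F down.
have FG : Filter G.
  apply: filter_from_filter; first by exists setT; apply: filterT.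
  move=> C1 C2 F1 F2; exists (C1 `&` C2); first exact: filterI.
  by move=> b [Bb [c [c1 c2] bc]]; split; split => //; exists c.
have PG : ProperFilter G.
  apply: filter_from_proper => // C FC.
  have [c [[b Bb bc] Cc]] := filter_ex (filterI Fup FC).
  by exists b; split => //; exists c.
have [|b [Bb clb]] := cB G PG; first by exists setT; [apply: filterT | move=> b []].
exists b; split; first exact: sub_up_closure.
move=> C V FC nV.
have GC : G (down C) by exists C.
have [b' [[_ [c Cc b'c]] Vb']] := clb _ _ GC (nbhs_interior nV).
exists c; split => //; apply: interior_subset.
exact: open_spec_le (@open_interior _ V) Vb' b'c.
Qed.

End SpecializationOrder.

Lemma continuous_spec_le (X Y : topologicalType) (f : X -> Y) (x y : X) :
  continuous f -> spec_le x y -> spec_le (f x) (f y).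
Proof.
move=> fc xy B nB.
by have [_ [/= -> fB]] := xy _ (fc x B nB); exists (f y).
Qed.

Section Retract.
Variables (X Y : topologicalType) (f : X -> Y) (g : Y -> X).
Hypotheses (fc : continuous f) (gc : continuous g) (fgK : cancel g f).

Lemma KX_up_closure_image (A : set Y) : KX A -> KX (up_closure (g @` A)).
Proof.
move=> [[a Aa] [cA _]]; split; first by exists (g a); apply: sub_up_closure; exists a.
split; last exact: up_closure_saturated.
by apply/up_closure_compact/continuous_compact => //; apply: continuous_subspaceT.
Qed.

Lemma retraction_up_closure_image (A : set Y) :
  saturated A -> up_closure (g @` A) `<=` f @^-1` A.
Proof.
move=> sA x [_ [a Aa <-] ax]; apply: sA Aa _.
by rewrite -[a in spec_le a _]fgK; apply: continuous_spec_le.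
Qed.

Lemma retract_S_star_well_filtered :
  S_star_well_filtered X -> S_star_well_filtered Y.
Proof.
move=> swfX I K [inhI KK Kfilt] G KG U oU [u Uu] KGU.
pose K' i := up_closure (g @` K i).
have K'filt : filtered_KX K'.
  split=> // [i|i j]; first exact: KX_up_closure_image.
  by have [k [ki kj]] := Kfilt i j; exists k; split; apply/up_closureS/image_subset.
have [i K'GU] : exists i, K' i `&` up_closure (g @` G) `<=` f @^-1` U.
  apply: (swfX _ _ K'filt _ (KX_up_closure_image _ KG)).
- exact: open_comp (fun x _ => fc x) oU.
- by exists (g u); rewrite /= fgK.
- move=> x [K'x Gx]; apply: KGU; split.
    by move=> i _; apply: retraction_up_closure_image (KK i).2.2 _ _; apply: K'x.
  exact: retraction_up_closure_image KG.2.2 _ Gx.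
exists i => y [Ky Gy]; rewrite -[y]fgK.
by apply: K'GU; split; apply: sub_up_closure; exists y.
Qed.

End Retract.

(* [dfwith] needs decidable equality on the index type, hence [{classic I}]. *)
Lemma factor_S_star_well_filtered (I : Type) (T : I -> topologicalType) :
  (forall i, inhabited (T i)) ->
  S_star_well_filtered (prod_topology T) -> forall i, S_star_well_filtered (T i).
Proof.
move=> inhT swfP i.
pose T' : {classic I} -> topologicalType := T.
have p : forall j, T' j by move=> j; apply: inhabited_witness; exact: inhT.
apply: (@retract_S_star_well_filtered (prod_topology T') (T' i) (@proj _ T' i)
  (dfwith p i) _ _ _ swfP).
- exact: proj_continuous.
- exact: dfwith_continuous.
- by move=> y; rewrite projK.
Qed.

Theorem mainTheorem16 :
  (forall (X Y : topologicalType),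
     kolmogorov_space X -> kolmogorov_space Y ->
     S_star_well_filtered X ->
     forall (f : X -> Y) (g : Y -> X),
       continuous f -> continuous g -> (forall y, f (g y) = y) ->
       S_star_well_filtered Y)
  /\
  (forall (I : Type) (T : I -> topologicalType),
     (forall i, kolmogorov_space (T i)) ->
     (forall i, inhabited (T i)) ->
     S_star_well_filtered (prod_topology T) ->
     forall i, S_star_well_filtered (T i)).
Proof.
split.
- by move=> X Y _ _ swfX f g fc gc fgK; apply: retract_S_star_well_filtered fgK swfX.
- by move=> I T _; exact: factor_S_star_well_filtered.
Qed.
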